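(* Let $V\in(\mathbb{R}\cup\{-\infty\})^{n\times p}$ have no row and no column identically equal to $-\infty$. Then $$\operatorname{inrad}(\operatorname{Col}(V))=\max_J \operatorname{inrad}(\operatorname{Col}(V[J])),$$ where the maximum is taken over all subsets $J\subset[p]$ of cardinality $n$ (with the convention that the maximum is $0$ if $p<n$). Moreover, if the inner radius $\operatorname{inrad}(\operatorname{Col}(V))$ is positive, the maximum is achieved by some $J$ such that $\operatorname{Col}(V[J])$ is simplicial.
   Context: $\mathbb{R}_{\max}=\mathbb{R}\cup\{-\infty\}$. $V[J]$ is the submatrix of $V$ formed by the columns with indices in $J$. $\operatorname{Col}(W)=\{Wx\}$ is the tropical cone generated by the columns of $W$, with $(Wx)_i=\max_k(W_{ik}+x_k)$. Hilbert's projective metric: $d(x,y)=\inf\{\lambda-\mu:\lambda,\mu\in\mathbb{R},\ \mu+y_i\le x_i\le\lambda+y_i\ \forall i\}$; $B(a,r)=\{x:d(a,x)\le r\}$. $\operatorname{inrad}(\mathcal C)$ is the supremum of the radii of balls $B(a,r)$ with $a\in\mathbb{R}^n$ included in $\mathcal C$. A vector $u$ of a tropical cone $\mathcal C$ is extreme if $u=v\vee w$ ($\vee$ = entrywise max) with $v,w\in\mathcal C$ implies $u=v$ or $u=w$; a tropical cone in $\mathbb{R}_{\max}^n$ is simplicial if it has precisely $n$ extreme directions (sets $\{\lambda+u:\lambda\in\mathbb{R}_{\max}\}$ with $u$ extreme). *)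

From HB Require Import structures.
From mathcomp Require Import all_boot all_order all_algebra.
From mathcomp Require Import boolp classical_sets cardinality reals ereal.
Set Implicit Arguments. Unset Strict Implicit. Unset Printing Implicit Defensive.
Import Order.TTheory GRing.Theory Num.Theory.
Local Open Scope classical_set_scope.
Local Open Scope ring_scope.

(* The max-plus semiring R_max = R ∪ {-oo}: [None] is -oo, [Some r] is r. *)
Definition Rmax (R : realType) := option R.

Section Tropical.
Variable R : realType.

Definition rmax_le (a b : Rmax R) : bool :=
  match a, b with
  | None, _ => true
  | Some _, None => false
  | Some x, Some y => x <= y
  end.

Definition rmax_add (a b : Rmax R) : Rmax R :=
  match a, b with
  | None, _ => b
  | _, None => a
  | Some x, Some y => Some (Num.max x y)
  end.

Definition rmax_mul (a b : Rmax R) : Rmax R :=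
  match a, b with
  | Some x, Some y => Some (x + y)
  | _, _ => None
  end.

Definition vjoin n (v w : 'I_n -> Rmax R) : 'I_n -> Rmax R :=
  fun i => rmax_add (v i) (w i).

Definition vscale n (l : Rmax R) (u : 'I_n -> Rmax R) : 'I_n -> Rmax R :=
  fun i => rmax_mul l (u i).

Definition trop_mulv n q (W : 'M[Rmax R]_(n, q)) (x : 'I_q -> Rmax R) :
  'I_n -> Rmax R :=
  fun i => \big[rmax_add/None]_(k < q) rmax_mul (W i k) (x k).

Definition Col n q (W : 'M[Rmax R]_(n, q)) : set ('I_n -> Rmax R) :=
  [set y | exists x : 'I_q -> Rmax R, y = trop_mulv W x].

Definition subcols n p (V : 'M[Rmax R]_(n, p)) (J : {set 'I_p}) :
  'M[Rmax R]_(n, #|J|) :=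
  \matrix_(i < n, j < #|J|) V i (enum_val j).

Definition fin_vec n (a : 'I_n -> R) : 'I_n -> Rmax R := fun i => Some (a i).

Definition hilbert_dist n (x y : 'I_n -> Rmax R) : \bar R :=
  ereal_inf [set e : \bar R | exists lam mu : R,
     (forall i, rmax_le (rmax_mul (Some mu) (y i)) (x i) &&
                rmax_le (x i) (rmax_mul (Some lam) (y i))) /\
     e = ((lam - mu)%R)%:E].

Definition hball n (a : 'I_n -> R) (r : R) : set ('I_n -> Rmax R) :=
  [set x | (hilbert_dist (fin_vec a) x <= r%:E)%E].

Definition inrad n (C : set ('I_n -> Rmax R)) : \bar R :=
  ereal_sup [set e : \bar R | exists r : R,
     (exists a : 'I_n -> R, hball a r `<=` C) /\ e = r%:E].

Definition vzero n : 'I_n -> Rmax R := fun _ => None.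

Definition extreme n (C : set ('I_n -> Rmax R)) (u : 'I_n -> Rmax R) : Prop :=
  C u /\ u <> @vzero n /\
  forall v w, C v -> C w -> u = vjoin v w -> u = v \/ u = w.

Definition direction n (u : 'I_n -> Rmax R) : set ('I_n -> Rmax R) :=
  [set v | exists l : Rmax R, v = vscale l u].

Definition extreme_directions n (C : set ('I_n -> Rmax R)) :
    set (set ('I_n -> Rmax R)) :=
  [set D | exists u, extreme C u /\ D = direction u].

Definition simplicial n (C : set ('I_n -> Rmax R)) : Prop :=
  (extreme_directions C #= [set: 'I_n])%card.

End Tropical.

From HB Require Import structures.
From mathcomp Require Import all_boot all_order all_algebra.
From mathcomp Require Import boolp classical_sets cardinality reals ereal.
From mathcomp Require Import lra.
Set Implicit Arguments. Unset Strict Implicit. Unset Printing Implicit Defensive.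
Import Order.TTheory GRing.Theory Num.Theory.
Local Open Scope classical_set_scope.
Local Open Scope ring_scope.

(* A Hilbert ball B(a, r) with r > 0 lies in Col(W) exactly when it admits a
   certificate: for every row k, a column j_k of W and a scalar t_k such that
   t_k + W[., j_k] equals a_k in row k and is at most a_i - r in every other
   row i.  Necessity: write the vertex of the ball equal to a in row k and to
   a - r elsewhere as a max-plus combination of columns, and pick a column
   attaining row k.  Sufficiency: an explicit combination of the columns j_k.
   The certificate makes the assignment k |-> j_k strictly optimal on every
   2 x 2 minor, so the j_k are pairwise distinct and the ball already lies in
   Col(V[J]) for J = {j_1, ..., j_n}; this gives the formula for the inner
   radius, and inrad = 0 when p < n.  If |J| = n and inrad(Col(V[J])) > 0, a
   certificate uses every column of V[J]; strict optimality makes each column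
   extreme and distinct columns span distinct directions, while every extreme
   vector of a tropical cone is a multiple of a generator, so Col(V[J]) is
   simplicial. *)

Lemma rmax_addA (R : realType) : associative (@rmax_add R).
Proof. by move=> [a|] [b|] [c|] //=; rewrite maxA. Qed.

Lemma rmax_addC (R : realType) : commutative (@rmax_add R).
Proof. by move=> [a|] [b|] //=; rewrite maxC. Qed.

Lemma rmax_add0 (R : realType) : left_id None (@rmax_add R).
Proof. by case. Qed.

HB.instance Definition _ (R : realType) :=
  Monoid.isComLaw.Build (Rmax R) None (@rmax_add R)
    (@rmax_addA R) (@rmax_addC R) (@rmax_add0 R).

Section MaxPlus.
Variable R : realType.
Implicit Types a b c : Rmax R.

Lemma rmax_le_refl a : rmax_le a a.
Proof. by case: a => //= x. Qed.

Lemma rmax_le_anti a b : rmax_le a b -> rmax_le b a -> a = b.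
Proof. by case: a => [x|]; case: b => [y|] //= xy yx; rewrite (@le_anti _ _ x y) ?xy. Qed.

Lemma rmax_le_addl a b : rmax_le a (rmax_add a b).
Proof. by case: a => [x|]; case: b => [y|] //=; rewrite le_max lexx. Qed.

Lemma rmax_le_addr a b : rmax_le b (rmax_add a b).
Proof. by rewrite rmax_addC rmax_le_addl. Qed.

Lemma rmax_add_le a b c : rmax_le a c -> rmax_le b c -> rmax_le (rmax_add a b) c.
Proof.
by case: a => [x|]; case: b => [y|]; case: c => [z|] //= xz yz; rewrite ge_max xz.
Qed.

Lemma rmax_addE a b : rmax_add a b = a \/ rmax_add a b = b.
Proof.
case: a => [x|]; case: b => [y|] /=; try by [left | right].
by rewrite /Order.max; case: ifP; [right | left].
Qed.

Lemma rmax_mulr_None a : rmax_mul a None = None.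
Proof. by case: a. Qed.

Lemma rmax_mulr_Some0 a : rmax_mul a (Some 0) = a.
Proof. by case: a => //= x; rewrite addr0. Qed.

Lemma rmax_mulC a b : rmax_mul a b = rmax_mul b a.
Proof. by case: a => [x|]; case: b => [y|] //=; rewrite addrC. Qed.

Lemma rmax_mulA a b c : rmax_mul a (rmax_mul b c) = rmax_mul (rmax_mul a b) c.
Proof. by case: a => [x|]; case: b => [y|]; case: c => [z|] //=; rewrite addrA. Qed.

Lemma rmax_mulDr a b c :
  rmax_mul a (rmax_add b c) = rmax_add (rmax_mul a b) (rmax_mul a c).
Proof. by case: a => [x|]; case: b => [y|]; case: c => [z|] //=; rewrite addr_maxr. Qed.

Section BigMax.
Variable q : nat.
Implicit Types F : 'I_q -> Rmax R.

Lemma rmax_big_le F c : (forall m, rmax_le (F m) c) ->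
  rmax_le (\big[@rmax_add R/None]_(m < q) F m) c.
Proof.
by move=> Fc; apply: (big_ind (fun z => rmax_le z c)) => // x y; apply: rmax_add_le.
Qed.

Lemma rmax_le_big F m : rmax_le (F m) (\big[@rmax_add R/None]_(k < q) F k).
Proof. by rewrite (bigD1 m) //= rmax_le_addl. Qed.

Lemma rmax_bigE F : \big[@rmax_add R/None]_(k < q) F k = None \/
  exists m, \big[@rmax_add R/None]_(k < q) F k = F m.
Proof.
apply: (big_ind (fun z => z = None \/ exists m, z = F m)); first by left.
  by move=> x y Hx Hy; case: (rmax_addE x y) => ->.
by move=> m _; right; exists m.
Qed.

Lemma rmax_big_attained F c m : (forall k, rmax_le (F k) c) -> F m = c ->
  \big[@rmax_add R/None]_(k < q) F k = c.
Proof.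
move=> Fc Fmc; apply: rmax_le_anti; first exact: rmax_big_le.
by rewrite -Fmc; exact: rmax_le_big.
Qed.

End BigMax.
End MaxPlus.

Section Cone.
Variables (R : realType) (n : nat).
Implicit Types (C : set ('I_n -> Rmax R)) (u v w : 'I_n -> Rmax R).

Lemma trop_mulv_ge q (W : 'M[Rmax R]_(n, q)) x i m :
  rmax_le (rmax_mul (W i m) (x m)) (trop_mulv W x i).
Proof. exact: (rmax_le_big (fun k => rmax_mul (W i k) (x k))). Qed.

Lemma Col_vzero q (W : 'M[Rmax R]_(n, q)) : Col W (@vzero R n).
Proof.
exists (fun _ => None); apply: funext => i.
by rewrite /trop_mulv big1 // => m _; rewrite rmax_mulr_None.
Qed.

Lemma Col_vjoin q (W : 'M[Rmax R]_(n, q)) v w :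
  Col W v -> Col W w -> Col W (vjoin v w).
Proof.
move=> [x ->] [y ->]; exists (vjoin x y); apply: funext => i.
rewrite /vjoin /trop_mulv -big_split /=.
by apply: eq_bigr => m _; rewrite rmax_mulDr.
Qed.

Lemma Col_scaled_col q (W : 'M[Rmax R]_(n, q)) m l :
  Col W (fun i => rmax_mul (W i m) l).
Proof.
exists (fun k => if k == m then l else None); apply: funext => i.
symmetry; apply: (rmax_big_attained (m := m)); last by rewrite eqxx.
by move=> k; case: eqP => [->|_]; rewrite ?rmax_mulr_None ?eqxx ?rmax_le_refl.
Qed.

Lemma Col_subcols_sub p (V : 'M[Rmax R]_(n, p)) (J : {set 'I_p}) :
  Col (subcols V J) `<=` Col V.
Proof.
move=> _ [x ->].
exists (fun m => if [pick k | enum_val k == m] is Some k then x k else None).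
apply: funext => i; rewrite /trop_mulv (bigID (mem J)) /=.
rewrite [X in rmax_add _ X]big1 => [|m mJ]; last first.
  case: pickP => [k /eqP km|_]; last exact: rmax_mulr_None.
  by rewrite -km enum_valP in mJ.
rewrite rmax_addC /= [RHS]big_enum_val; apply: eq_bigr => k _; rewrite mxE.
by case: pickP => [l /eqP /enum_val_inj ->|/(_ k)]; rewrite ?eqxx.
Qed.

Lemma big_vjoinE q (F : 'I_q -> 'I_n -> Rmax R) (s : seq 'I_q) i :
  (\big[@vjoin R n/@vzero R n]_(m <- s) F m) i =
  \big[@rmax_add R/None]_(m <- s) F m i.
Proof. by elim: s => [|m s IHs]; rewrite ?big_nil // !big_cons /vjoin IHs. Qed.

Lemma trop_mulvE q (W : 'M[Rmax R]_(n, q)) x :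
  trop_mulv W x =
  \big[@vjoin R n/@vzero R n]_(m < q) (fun i => rmax_mul (W i m) (x m)).
Proof. by apply: funext => i; rewrite big_vjoinE. Qed.

Lemma extreme_big_vjoin C q (F : 'I_q -> 'I_n -> Rmax R) (s : seq 'I_q) u :
  C (@vzero R n) -> (forall v w, C v -> C w -> C (vjoin v w)) ->
  (forall m, C (F m)) -> extreme C u ->
  u = \big[@vjoin R n/@vzero R n]_(m <- s) F m -> exists m, u = F m.
Proof.
move=> C0 Cjoin CF [_ [u0 u_ext]].
have Cbig t : C (\big[@vjoin R n/@vzero R n]_(m <- t) F m).
  by elim: t => [|m t IHt]; rewrite ?big_nil ?big_cons //; apply: Cjoin.
elim: s => [|m s IHs]; first by rewrite big_nil => /u0.
rewrite big_cons => /(u_ext _ _ (CF m) (Cbig s)) [->|]; [by exists m | exact: IHs].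
Qed.

Lemma extreme_Col_scaled_col q (W : 'M[Rmax R]_(n, q)) u :
  extreme (Col W) u -> exists m (s : R), u = vscale (Some s) (fun i => W i m).
Proof.
move=> u_ext; have [[x ux] [u0 _]] := u_ext.
rewrite trop_mulvE in ux.
have [m um] := extreme_big_vjoin (Col_vzero W) (@Col_vjoin _ W)
  (fun m => Col_scaled_col W m (x m)) u_ext ux.
case xm: (x m) um => [s|] um.
  by exists m, s; rewrite um; apply: funext => i; rewrite /vscale rmax_mulC.
by case: u0; rewrite um; apply: funext => i; rewrite rmax_mulr_None.
Qed.

Lemma direction_vscale (s : R) u : direction (vscale (Some s) u) = direction u.
Proof.
have vscaleM l1 l2 v : vscale l1 (vscale l2 v) = vscale (rmax_mul l1 l2) v.
  by apply: funext => i; rewrite /vscale rmax_mulA.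
apply/seteqP; split => _ [l ->].
  by exists (rmax_mul l (Some s)); rewrite vscaleM.
exists (rmax_mul l (Some (- s))); rewrite vscaleM -rmax_mulA /= addNr.
by rewrite rmax_mulr_Some0.
Qed.

End Cone.

Section Balls.
Variables (R : realType) (n : nat).
Implicit Types (a b : 'I_n -> R) (r : R) (x : 'I_n -> Rmax R).

Definition ball_vertex a r k : 'I_n -> Rmax R :=
  fun i => Some (if i == k then a k else a i - r).

Lemma hball_vertex a r k : 0 <= r -> hball a r (ball_vertex a r k).
Proof.
move=> r_ge0; apply: ge_ereal_inf; exists (r - 0)%:E; last by rewrite subr0.
exists r, 0; split => // i; rewrite /ball_vertex /fin_vec /=.
by case: eqP => [->|_]; apply/andP; split; lra.
Qed.

Lemma hballP a r x : hball a r x ->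
  exists b, x = fin_vec b /\ forall i k, (a i - b i) - (a k - b k) <= r.
Proof.
rewrite /hball /hilbert_dist => x_ball.
have x_fin i : exists b_i, x i = Some b_i.
  case xi: (x i) => [b_i|]; first by exists b_i.
  exfalso; move: x_ball; apply/negP; rewrite -ltNge; apply: (@lt_le_trans _ _ +oo%E).
    by rewrite ltry.
  by apply/ereal_infP => e [lam [mu [/(_ i) + _]]]; rewrite xi /fin_vec.
have [b xb] := choice x_fin; exists b; split; first by apply: funext => i; rewrite xb.
move=> i k; rewrite -lee_fin; apply: le_trans x_ball.
apply/ereal_infP => _ [lam [mu [x_between ->]]]; rewrite lee_fin.
move: (x_between i) (x_between k); rewrite !xb /fin_vec /= => /andP[_ ?] /andP[? _].
lra.
Qed.

Definition ball_cert q (W : 'M[Rmax R]_(n, q)) a r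
    (j : 'I_n -> 'I_q) (t : 'I_n -> R) :=
  (forall k, rmax_mul (W k (j k)) (Some (t k)) = Some (a k)) /\
  (forall k i, i != k ->
     rmax_le (rmax_mul (W i (j k)) (Some (t k))) (Some (a i - r))).

Section Certificates.
Variables (q : nat) (W : 'M[Rmax R]_(n, q)).

Lemma sub_Col_ball_cert a r : 0 <= r -> hball a r `<=` Col W ->
  exists j t, ball_cert W a r j t.
Proof.
move=> r_ge0 ball_sub.
have cert_k k : exists mt : 'I_q * R,
   rmax_mul (W k mt.1) (Some mt.2) = Some (a k) /\
   (forall i, i != k -> rmax_le (rmax_mul (W i mt.1) (Some mt.2)) (Some (a i - r))).
  have [x vertex_x] := ball_sub _ (hball_vertex a k r_ge0).
  have xk : trop_mulv W x k = Some (a k) by rewrite -vertex_x /ball_vertex eqxx.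
  have [xk_None|[m xk_m]] := rmax_bigE (fun m => rmax_mul (W k m) (x m)).
    by move: xk; rewrite /trop_mulv xk_None.
  case xm: (x m) => [s|]; last by move: xk; rewrite /trop_mulv xk_m xm rmax_mulr_None.
  exists (m, s); split; first by rewrite -xm -xk_m.
  move=> i ik; have := trop_mulv_ge W x i m.
  by rewrite -vertex_x /ball_vertex (negbTE ik) xm.
have [f cert_f] := choice cert_k.
exists (fun k => (f k).1), (fun k => (f k).2).
by split => k; [exact: (cert_f k).1 | exact: (cert_f k).2].
Qed.

Lemma ball_cert_diag a r j t : ball_cert W a r j t ->
  forall k, exists c, W k (j k) = Some c /\ c + t k = a k.
Proof.
by case=> diag _ k; move: (diag k); case: (W k (j k)) => [c|] //= [<-]; exists c.
Qed.

Lemma ball_cert_cross a r j t k l ck cl w z :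
  0 < r -> ball_cert W a r j t -> k != l ->
  W k (j k) = Some ck -> W l (j l) = Some cl ->
  W k (j l) = Some w -> W l (j k) = Some z -> w + z < ck + cl.
Proof.
move=> r_gt0 [diag off] kl Wk Wl Wkl Wlk; have lk : l != k by rewrite eq_sym.
move: (diag k) (diag l) (off l k kl) (off k l lk).
by rewrite Wk Wl Wkl Wlk /= => -[?] [?] ? ?; lra.
Qed.

Lemma ball_cert_inj a r j t : 0 < r -> ball_cert W a r j t -> injective j.
Proof.
move=> r_gt0 cert k l jkl; apply/eqP/negPn/negP => kl.
have [ck [Wk _]] := ball_cert_diag cert k; have [cl [Wl _]] := ball_cert_diag cert l.
have Wkl : W k (j l) = Some ck by rewrite -jkl.
have Wlk : W l (j k) = Some cl by rewrite jkl.
by have := ball_cert_cross r_gt0 cert kl Wk Wl Wkl Wlk; rewrite ltxx.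
Qed.

Lemma ball_cert_sub_Col a r j t : 0 < r -> ball_cert W a r j t ->
  hball a r `<=` Col W.
Proof.
move=> r_gt0 cert; have j_inj := ball_cert_inj r_gt0 cert; case: cert => diag off.
move=> _ /hballP [b [-> ab_r]].
pose y m := if [pick k | j k == m] is Some k then Some (t k + (b k - a k)) else None.
exists y; apply: funext => i; symmetry; apply: (rmax_big_attained (m := j i)).
- move=> m; rewrite /y; case: pickP => [k /eqP <-|_]; last by rewrite rmax_mulr_None.
  have [->|ik] := eqVneq i k.
    by move: (diag k); case: (W k (j k)) => [w|] //= [?]; lra.
  by move: (off k i ik); case: (W i (j k)) => [w|] //= ?; have := ab_r i k; lra.
- rewrite /y; case: pickP => [k /eqP /j_inj ->|/(_ i)]; last by rewrite eqxx.
  by move: (diag i); case: (W i (j i)) => [w|] //= [?]; congr Some; lra.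
Qed.

Lemma hball_sub_ColP a r : 0 < r ->
  hball a r `<=` Col W <-> exists j t, ball_cert W a r j t.
Proof.
move=> r_gt0; split; first exact/sub_Col_ball_cert/ltW.
by move=> [j [t]]; apply: ball_cert_sub_Col.
Qed.

End Certificates.
End Balls.

Lemma ball_cert_subcols (R : realType) n p (V : 'M[Rmax R]_(n, p)) a r j t :
  ball_cert V a r j t ->
  exists j', ball_cert (subcols V (j @: [set: 'I_n]%SET)) a r j' t.
Proof.
move=> [diag off].
have jJ k : j k \in j @: [set: 'I_n]%SET by rewrite imset_f ?inE.
exists (fun k => enum_rank_in (jJ k) (j k)).
have subcolsE i k :
    subcols V (j @: [set: 'I_n]%SET) i (enum_rank_in (jJ k) (j k)) = V i (j k).
  by rewrite mxE enum_rankK_in.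
by split => [k|k i ik]; rewrite subcolsE; [exact: diag | exact: off].
Qed.

Lemma hball_sub_Col_subcols (R : realType) n p (V : 'M[Rmax R]_(n, p)) a (r : R) :
  0 < r -> hball a r `<=` Col V ->
  exists J : {set 'I_p}, #|J| = n /\ hball a r `<=` Col (subcols V J).
Proof.
move=> r_gt0 /(hball_sub_ColP _ _ r_gt0) [j [t cert]].
have [j' cert'] := ball_cert_subcols cert.
exists (j @: [set: 'I_n]%SET); split; last by apply/hball_sub_ColP => //; exists j', t.
by rewrite card_imset ?cardsT ?card_ord //; exact: ball_cert_inj r_gt0 cert.
Qed.

Section Simplicial.
Variables (R : realType) (n q : nat) (W : 'M[Rmax R]_(n, q)).
Variables (a : 'I_n -> R) (r : R) (j : 'I_n -> 'I_q) (t : 'I_n -> R).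
Hypotheses (r_gt0 : 0 < r) (cert : ball_cert W a r j t).
Hypothesis j_surj : forall m, exists k, j k = m.

Let col k : 'I_n -> Rmax R := fun i => W i (j k).

Lemma Col_le_col_eq k v : Col W v -> (forall i, rmax_le (v i) (col k i)) ->
  v k = col k k -> v = col k.
Proof.
move=> [x ->] v_le vk; have [ck [Wk _]] := ball_cert_diag cert k.
have [vk_None|[m vk_m]] := rmax_bigE (fun m => rmax_mul (W k m) (x m)).
  by move: vk; rewrite /trop_mulv vk_None /col Wk.
move: vk; rewrite /trop_mulv vk_m /col Wk; have [l <-] := j_surj m.
case xjl: (x (j l)) => [s|]; last by rewrite rmax_mulr_None.
case Wkl: (W k (j l)) => [w|] //= [ws].
have term_le i : rmax_le (rmax_mul (W i (j l)) (Some s)) (trop_mulv W x i).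
  by rewrite -xjl; apply: trop_mulv_ge.
have [lk|lk] := eqVneq l k.
  have s0 : s = 0 by move: Wkl; rewrite lk Wk => -[]; lra.
  apply: funext => i; apply: rmax_le_anti; first exact: v_le.
  by have := term_le i; rewrite lk s0 rmax_mulr_Some0.
exfalso; have [cl [Wl _]] := ball_cert_diag cert l.
move: (term_le l) (v_le l); rewrite Wl /col.
case Wlk: (W l (j k)) => [z|]; case: (trop_mulv W x l) => [vl|] //= ? ?.
by have := ball_cert_cross r_gt0 cert lk Wl Wk Wlk Wkl; lra.
Qed.

Lemma extreme_col k : extreme (Col W) (col k).
Proof.
have [ck [Wk _]] := ball_cert_diag cert k.
split.
  by have := Col_scaled_col W (j k) (Some 0); under eq_fun do rewrite rmax_mulr_Some0.
split; first by move=> /(congr1 (fun v => v k)); rewrite /col Wk.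
move=> v w Cv Cw vw; have colk : col k k = rmax_add (v k) (w k) by rewrite vw.
have [vwk|vwk] := rmax_addE (v k) (w k); [left|right]; symmetry.
- by apply: Col_le_col_eq => // [i|]; rewrite ?vw ?colk ?vwk //; apply: rmax_le_addl.
- by apply: Col_le_col_eq => // [i|]; rewrite ?vw ?colk ?vwk //; apply: rmax_le_addr.
Qed.

Lemma direction_col_inj : injective (fun k => direction (col k)).
Proof.
move=> k l /= dir_kl; apply/eqP/negPn/negP => kl.
have : direction (col k) (col l).
  rewrite dir_kl; exists (Some 0); apply: funext => i.
  by rewrite /vscale rmax_mulC rmax_mulr_Some0.
move=> [s /[dup] /(congr1 (fun v => v l)) col_l /(congr1 (fun v => v k))].
have [ck [Wk _]] := ball_cert_diag cert k; have [cl [Wl _]] := ball_cert_diag cert l.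
move: col_l; rewrite /vscale /col Wk Wl; case: s => [s|] //=.
case Wlk: (W l (j k)) => [z|] //=; case Wkl: (W k (j l)) => [w|] //= [?] [?].
by have := ball_cert_cross r_gt0 cert kl Wk Wl Wkl Wlk; lra.
Qed.

Lemma simplicial_Col : simplicial (Col W).
Proof.
rewrite /simplicial.
have -> : extreme_directions (Col W) = (fun k => direction (col k)) @` [set: 'I_n].
  apply/seteqP; split => [D [u [u_ext ->]]|D [k _ <-]].
    have [m [s ->]] := extreme_Col_scaled_col u_ext; have [k <-] := j_surj m.
    by exists k => //; rewrite direction_vscale.
  by exists (col k); split => //; exact: extreme_col.
by apply: inj_card_eq => k l _ _; exact: direction_col_inj.
Qed.

End Simplicial.

Section InnerRadius.
Variables (R : realType) (n : nat).
Implicit Types C D : set ('I_n -> Rmax R).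

Lemma le_inrad C D : C `<=` D -> (inrad C <= inrad D)%E.
Proof.
move=> CD; apply: ereal_sup_le => _ [r [[a aC] ->]].
by exists r; split => //; exists a; apply: subset_trans CD.
Qed.

Lemma inrad_ge_ball C a r : hball a r `<=` C -> (r%:E <= inrad C)%E.
Proof. by move=> aC; apply: ereal_sup_ubound; exists r; split => //; exists a. Qed.

Lemma inrad_le C e : (0 <= e)%E ->
  (forall a r, 0 < r -> hball a r `<=` C -> (r%:E <= e)%E) -> (inrad C <= e)%E.
Proof.
move=> e_ge0 ball_le; apply: ge_ereal_sup => _ [r [[a aC] ->]].
have [r_le0|r_gt0] := leP r 0; last exact: ball_le aC.
by apply: le_trans e_ge0; rewrite lee_fin.
Qed.

Lemma inrad_gt0_ball C : (0 < inrad C)%E -> exists a r, 0 < r /\ hball a r `<=` C.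
Proof.
move=> inrad_gt0; apply: contrapT => no_ball; move: inrad_gt0; apply/negP.
rewrite -leNgt; apply: inrad_le => // a r r_gt0 aC.
by case: no_ball; exists a, r.
Qed.

Lemma inrad_ge0 C : C (@vzero R n) -> (0 <= inrad C)%E.
Proof.
move=> C0.
have neg_ball r : r < 0 -> (r%:E <= inrad C)%E.
  move=> r_lt0; apply: (@inrad_ge_ball _ (fun _ => 0)) => _ /hballP [b [-> ab_r]].
  suff -> : fin_vec b = @vzero R n by [].
  by apply: funext => i; exfalso; have := ab_r i i; lra.
case: (inrad C) neg_ball => [s| |] neg_ball //.
  rewrite lee_fin leNgt; apply/negP => s_lt0.
  have /neg_ball : s / 2 < 0 by lra.
  by rewrite lee_fin; lra.
by have /neg_ball := @ltrN10 R.
Qed.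

Lemma simplicial_Col_inrad_gt0 q (W : 'M[Rmax R]_(n, q)) :
  (q <= n)%N -> (0 < inrad (Col W))%E -> simplicial (Col W).
Proof.
move=> qn /inrad_gt0_ball [a [r [r_gt0 /(hball_sub_ColP _ _ r_gt0) [j [t cert]]]]].
apply: (simplicial_Col r_gt0 cert) => m.
have /codomP [k ->] : m \in codom j.
  by apply: inj_card_onto; [exact: ball_cert_inj r_gt0 cert | rewrite !card_ord].
by exists k.
Qed.

End InnerRadius.

Lemma exists_set_card_ord n p : (n <= p)%N -> exists J : {set 'I_p}, #|J| = n.
Proof.
move=> np; exists (widen_ord np @: [set: 'I_n]%SET).
by rewrite card_imset ?cardsT ?card_ord // => k l [] /ord_inj.
Qed.

Section Subcolumns.
Variables (R : realType) (n p : nat) (V : 'M[Rmax R]_(n, p)).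

Lemma inrad_subcols_le J : (inrad (Col (subcols V J)) <= inrad (Col V))%E.
Proof. exact/le_inrad/Col_subcols_sub. Qed.

Lemma inrad_Col_eq0 : (p < n)%N -> inrad (Col V) = 0%E.
Proof.
move=> pn; apply/eqP; rewrite eq_le (inrad_ge0 (Col_vzero V)) andbT.
apply: inrad_le => // a r r_gt0 /(hball_sub_ColP _ _ r_gt0) [j [t cert]].
by have := leq_card j (ball_cert_inj r_gt0 cert); rewrite !card_ord leqNgt pn.
Qed.

Lemma inrad_Col_sup : (n <= p)%N -> inrad (Col V) =
  ereal_sup [set inrad (Col (subcols V J)) | J in [set J : {set 'I_p} | #|J| = n]].
Proof.
move=> np; have [J0 J0n] := exists_set_card_ord np.
apply/eqP; rewrite eq_le; apply/andP; split; last first.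
  by apply: ge_ereal_sup => _ [J _ <-]; exact: inrad_subcols_le.
apply: inrad_le => [|a r r_gt0 /(hball_sub_Col_subcols r_gt0) [J [Jn aJ]]].
  apply: le_trans (inrad_ge0 (Col_vzero (subcols V J0))) _.
  by apply: ereal_sup_ubound; exists J0.
apply: le_trans (inrad_ge_ball aJ) _.
by apply: ereal_sup_ubound; exists J.
Qed.

Lemma inrad_Col_attained : (n <= p)%N ->
  exists2 J : {set 'I_p}, #|J| = n & inrad (Col V) = inrad (Col (subcols V J)).
Proof.
move=> np; have [J0 /eqP J0n] := exists_set_card_ord np.
case: (arg_maxP (i0 := J0) (P := fun J : {set 'I_p} => #|J| == n)
                (fun J => inrad (Col (subcols V J))) J0n) => J /eqP Jn J_max.
exists J => //; apply/eqP; rewrite eq_le inrad_subcols_le andbT inrad_Col_sup //.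
by apply: ge_ereal_sup => _ [J' /eqP J'n <-]; exact: J_max.
Qed.

End Subcolumns.

Theorem corollary3p9 (R : realType) (n p : nat) (V : 'M[Rmax R]_(n, p))
  (hrow : forall i : 'I_n, exists j : 'I_p, V i j <> None)
  (hcol : forall j : 'I_p, exists i : 'I_n, V i j <> None) :
  inrad (Col V) =
    (if (p < n)%N then 0%E
     else ereal_sup [set inrad (Col (subcols V J)) |
                     J in [set J : {set 'I_p} | #|J| = n]])
  /\ ((0 < inrad (Col V))%E ->
      exists J : {set 'I_p}, #|J| = n /\
        simplicial (Col (subcols V J)) /\
        inrad (Col V) = inrad (Col (subcols V J))).
Proof.
split; first by case: ltnP => [/inrad_Col_eq0|/inrad_Col_sup].
move=> inrad_gt0; have np : (n <= p)%N.
  rewrite leqNgt; apply/negP => /inrad_Col_eq0 inrad0.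
  by rewrite inrad0 ltxx in inrad_gt0.
have [J Jn inrad_J] := inrad_Col_attained V np.
exists J; split=> //; split=> //.
by apply: simplicial_Col_inrad_gt0; [rewrite Jn | rewrite -inrad_J].
Qed.
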